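(* Assume $\sum_n n^2\pi(n)<\infty$. If $R_0\le1$, then $m=0$ is the unique solution in $[0,\bar\pi]$ of $\bar\mu_\infty(m)=m$. If $R_0>1$, then there exists a unique $m_\star\in(0,\bar\pi]$ with $\bar\mu_\infty(m_\star)=m_\star$.
   Context: $\lambda_L,\lambda_G,\gamma>0$; $\pi$ a probability distribution on $\mathbb N$ with mean $\bar\pi$. For constant $m\in[0,\bar\pi]$, $\mu_\infty(m)$ is the unique stationary distribution (with first marginal $\pi$) of $(\nu,X_t(m))$ where $\nu\sim\pi$ and $X_t(m) = X_0 + P_{inf}\big( \int_{0}^{t} [ \lambda_L X_s(m) + \lambda_G \frac{\nu}{\bar\pi}m ](1-\frac{X_s(m)}{\nu}) ds \big) - P_{rec}\big( \int_{0}^{t} \gamma X_s(m) ds \big)$ with independent standard Poisson processes; $\bar\mu_\infty(m)$ is the mean of the second coordinate under $\mu_\infty(m)$. $R_0=\frac{\lambda_G}{\bar\pi}\mathbb E\big[\nu\int_0^\infty I(t)dt\,\big|\,I(0)=1\big]$ where $\nu\sim\pi$ and $I(t)=I(0)+P_{inf}\big(\int_0^t\lambda_L(1-I(s)/\nu)I(s)ds\big)-P_{rec}\big(\int_0^t\gamma I(s)ds\big)$. *)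

From Stdlib Require Import Reals Lra.
Open Scope R_scope.

(* For a household of size nu and constant global
   force m, X(m) is the continuous-time Markov chain on {0,...,nu} whose
   Poisson-clock representation in the paper gives the jump rates
     x -> x+1  at rate  birth lL lG pb m nu x
     x -> x-1  at rate  death g x.                                       *)
Definition birth (lL lG pb m : R) (nu x : nat) : R :=
  (lL * INR x + lG * (INR nu / pb) * m) * (1 - INR x / INR nu).

Definition death (g : R) (x : nat) : R := g * INR x.

(* Balance (stationarity) equation of the generator at state x of a
   birth-death chain on {0,...,nu} with rates b, d, for the measure p:
   total probability flux into x = total flux out of x. *)
Definition balance_at (b d : nat -> R) (p : nat -> R) (x : nat) : Prop :=
  (match x with O => 0 | S y => p y * b y end) + p (S x) * d (S x)
  = p x * (b x + d x).

(* mu is a stationary distribution of the pair (nu, X_t(m)), nu ~ pi, with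
   first marginal pi: mu nu x is the mass of state (nu, x).  Since nu is
   constant along trajectories, the generator acts fibrewise in nu. *)
Definition joint_stationary (lL lG g pb m : R) (pi : nat -> R)
    (mu : nat -> nat -> R) : Prop :=
  (forall nu x, 0 <= mu nu x) /\
  (forall nu x, (nu < x)%nat -> mu nu x = 0) /\
  (forall nu, sum_f_R0 (mu nu) nu = pi nu) /\
  (forall nu x, (x <= nu)%nat ->
      balance_at (birth lL lG pb m nu) (death g) (mu nu) x).

Definition second_mean (mu : nat -> nat -> R) (v : R) : Prop :=
  infinite_sum (fun nu => sum_f_R0 (fun x => INR x * mu nu x) nu) v.

Definition mubar_is (lL lG g pb : R) (pi : nat -> R) (m v : R) : Prop :=
  exists mu, joint_stationary lL lG g pb m pi mu /\ second_mean mu v.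

(* Expected total integral E[ int_0^oo I(t) dt | I(0) = x ] for the
   within-household chain I on {0,...,nu} (absorbed at 0) with rates
   x -> x+1 at lL x (1 - x/nu), x -> x-1 at g x.  As a function of the
   initial state it is the (unique, the chain being finite and absorbed
   a.s.) solution h of the Poisson equation  Q h = - id,  h(0) = 0. *)
Definition expected_integral (lL g : R) (nu : nat) (h : nat -> R) : Prop :=
  h O = 0 /\
  forall x, (1 <= x <= nu)%nat ->
    lL * INR x * (1 - INR x / INR nu) * (h (S x) - h x)
    + g * INR x * (h (pred x) - h x) + INR x = 0.

(* R0 = (lG/pb) * sum_nu pi(nu) nu H(nu), with H(nu) = h nu 1, a series of
   nonnegative terms (possibly +oo).  "R0 <= 1" : all partial sums <= 1. *)
Definition R0_le_1 (lG pb : R) (pi : nat -> R) (h : nat -> nat -> R) : Prop :=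
  forall N, lG / pb * sum_f_R0 (fun nu => pi nu * INR nu * h nu 1%nat) N <= 1.

(* For a household of size nu, the number of infected X(m) is a birth-death chain
   on {0,...,nu}; detailed balance makes its stationary law proportional to
   C(nu,x) kappa^x t(t+1)...(t+x-1), with kappa = lL/(nu g) and t = lG nu m/(pb lL).
   Pascal-type identities between these sums turn the stationary mean into
   m q(m,nu), where q is a continued fraction in t: q(m,nu) is strictly decreasing
   in m while m q(m,nu) is nondecreasing.  At m = 0 the same continued fraction
   solves the Poisson equation for E[int I], so sum_nu q(0,nu) = R0.  For m > 0 the
   equation mubar(m) = m thus reads sum_nu q(m,nu) = 1: it has no solution when
   R0 <= 1 and at most one in general.  When R0 > 1, continuity of q at m = 0 gives
   a small m0 with mubar(m0) >= m0, and since mubar is nondecreasing and bounded by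
   pb, Knaster-Tarski on [m0, pb] yields a fixed point. *)

From Stdlib Require Import Reals Lra Lia Classical.
Open Scope R_scope.

Lemma Rdiv_le_0_compat (a b : R) : 0 <= a -> 0 < b -> 0 <= a / b.
Proof. intros Ha Hb; apply Rmult_le_pos; [exact Ha|left; apply Rinv_0_lt_compat, Hb]. Qed.

Lemma Rdiv_le_cross (a b c d : R) : 0 < b -> 0 < d -> a * d <= c * b -> a / b <= c / d.
Proof.
  intros Hb Hd H.
  replace (a / b) with (a * d * / (b * d)) by (field; lra).
  replace (c / d) with (c * b * / (b * d)) by (field; lra).
  apply Rmult_le_compat_r; [left; apply Rinv_0_lt_compat; nra|exact H].
Qed.

Lemma Rdiv_lt_cross (a b c d : R) : 0 < b -> 0 < d -> a * d < c * b -> a / b < c / d.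
Proof.
  intros Hb Hd H.
  replace (a / b) with (a * d * / (b * d)) by (field; lra).
  replace (c / d) with (c * b * / (b * d)) by (field; lra).
  apply Rmult_lt_compat_r; [apply Rinv_0_lt_compat; nra|exact H].
Qed.

Lemma sum_f_R0_ge_term (f : nat -> R) (n N : nat) :
  (forall i, 0 <= f i) -> (n <= N)%nat -> f n <= sum_f_R0 f N.
Proof.
  intros Hf HnN; induction HnN as [|N _ IH]; simpl.
  - destruct n as [|n]; simpl; [lra|].
    pose proof (cond_pos_sum f n Hf); lra.
  - pose proof (Hf (S N)); lra.
Qed.

Lemma sum_f_R0_succ_shift (f : nat -> R) (n : nat) :
  sum_f_R0 f (S n) = f 0%nat + sum_f_R0 (fun i => f (S i)) n.
Proof. rewrite decomp_sum by lia; reflexivity. Qed.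

Lemma sum_f_R0_uniform_lower_bound (f : R -> nat -> R) (N : nat) :
  (forall m n, 0 <= m -> 0 <= f m n) ->
  (forall n, exists c, 0 <= c /\ forall m, 0 <= m -> f 0 n <= (1 + c * m) * f m n) ->
  exists C, 0 <= C /\
    forall m, 0 <= m -> sum_f_R0 (f 0) N <= (1 + C * m) * sum_f_R0 (f m) N.
Proof.
  intros Hnn Hlow; induction N as [|N [C [HC IH]]]; [apply Hlow|].
  destruct (Hlow (S N)) as [c [Hc HN]].
  exists (Rmax C c); split; [pose proof (Rmax_l C c); lra|].
  intros m Hm; simpl.
  specialize (IH m Hm); specialize (HN m Hm).
  pose proof (cond_pos_sum (f m) N (fun n => Hnn m n Hm)).
  pose proof (Hnn m (S N) Hm).
  assert (C * m <= Rmax C c * m) by (apply Rmult_le_compat_r; [lra|apply Rmax_l]).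
  assert (c * m <= Rmax C c * m) by (apply Rmult_le_compat_r; [lra|apply Rmax_r]).
  nra.
Qed.

Lemma infinite_sum_zero : infinite_sum (fun _ => 0) 0.
Proof.
  intros eps Heps; exists 0%nat; intros N _.
  replace (sum_f_R0 (fun _ => 0) N) with 0 by (induction N; simpl; lra).
  unfold Rdist; rewrite Rminus_diag, Rabs_R0; lra.
Qed.

Lemma infinite_sum_scal (f : nat -> R) (l c : R) :
  infinite_sum f l -> infinite_sum (fun n => c * f n) (c * l).
Proof.
  intros Hf.
  assert (Hc : Un_cv (fun _ => c) c).
  { intros eps Heps; exists 0%nat; intros n _.
    unfold Rdist; rewrite Rminus_diag, Rabs_R0; lra. }
  apply (Un_cv_ext (fun N => c * sum_f_R0 f N)).
  - intros N; rewrite scal_sum; apply sum_eq; intros; ring.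
  - exact (CV_mult _ _ _ _ Hc Hf).
Qed.

Lemma infinite_sum_ext (f g : nat -> R) (l : R) :
  infinite_sum f l -> (forall n, f n = g n) -> infinite_sum g l.
Proof. intros Hf Hfg; apply (Un_cv_ext (sum_f_R0 f)); [intros N; apply sum_eq; auto|exact Hf]. Qed.

Lemma infinite_sum_le (f g : nat -> R) (a b : R) :
  (forall n, f n <= g n) -> infinite_sum f a -> infinite_sum g b -> a <= b.
Proof. intros Hfg; apply Rle_cv_lim; intros N; exact (sum_growing f g N Hfg). Qed.

Lemma infinite_sum_pos (f : nat -> R) (l : R) (n : nat) :
  infinite_sum f l -> (forall i, 0 <= f i) -> 0 < f n -> 0 < l.
Proof.
  intros Hl Hf Hn.
  pose proof (sum_incr f n l Hl Hf); pose proof (sum_f_R0_ge_term f n n Hf (le_n n)); lra.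
Qed.

Lemma infinite_sum_le_bound (f : nat -> R) (l B : R) (n0 : nat) :
  infinite_sum f l -> (forall N, (n0 <= N)%nat -> sum_f_R0 f N <= B) -> l <= B.
Proof.
  intros Hf HB; apply Rnot_lt_le; intros HBl.
  destruct (Hf (l - B)) as [N HN]; [lra|].
  specialize (HN (max N n0) (Nat.le_max_l _ _)).
  specialize (HB (max N n0) (Nat.le_max_r _ _)).
  unfold Rdist in HN; apply Rabs_def2 in HN; lra.
Qed.

Lemma infinite_sum_pos_term (f : nat -> R) (l : R) :
  infinite_sum f l -> 0 < l -> exists n, 0 < f n.
Proof.
  intros Hf Hl; apply NNPP; intros Hnone.
  assert (Hneg : forall n, f n <= 0)
    by (intros n; apply Rnot_lt_le; intros Hn; apply Hnone; exists n; exact Hn).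
  enough (l <= 0) by lra.
  apply (infinite_sum_le_bound f l 0 0 Hf); intros N _.
  induction N as [|N IH]; simpl; [apply Hneg|].
  pose proof (Hneg (S N)); lra.
Qed.

Lemma infinite_sum_lt_bound (f g : nat -> R) (a B : R) (n0 : nat) :
  infinite_sum f a -> (forall n, f n <= g n) -> f n0 < g n0 ->
  (forall N, sum_f_R0 g N <= B) -> a < B.
Proof.
  intros Hf Hfg Hlt HB.
  enough (a <= B - (g n0 - f n0)) by lra.
  apply (infinite_sum_le_bound f a _ n0 Hf); intros N HN.
  pose proof (sum_f_R0_ge_term (fun n => g n - f n) n0 N) as Hgap.
  rewrite minus_sum in Hgap.
  specialize (Hgap (fun n => ltac:(pose proof (Hfg n); lra)) HN).
  specialize (HB N); lra.
Qed.

(* Knaster-Tarski on [a, b]; the monotone map is given by its graph [S] because the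
   maps it is applied to are sums of series, which are only relations here. *)
Lemma monotone_graph_fixed_point (S : R -> R -> Prop) (a b : R) :
  a <= b ->
  (forall x, a <= x <= b -> exists v, S x v) ->
  (forall x y v w, a <= x <= y -> y <= b -> S x v -> S y w -> v <= w) ->
  (forall x v, a <= x <= b -> S x v -> v <= b) ->
  (exists v, S a v /\ a <= v) ->
  exists x, a <= x <= b /\ S x x.
Proof.
  intros Hab Hex Hmono Hbound [va [Hva Hava]].
  set (E := fun x => a <= x <= b /\ exists v, S x v /\ x <= v).
  destruct (completeness E) as [s [Hub Hleast]].
  { exists b; intros x [Hx _]; lra. }
  { exists a; split; [lra|]; exists va; auto. }
  assert (Has : a <= s) by (apply Hub; split; [lra|]; exists va; auto).
  assert (Hsb : s <= b) by (apply Hleast; intros x [Hx _]; lra).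
  destruct (Hex s (conj Has Hsb)) as [vs Hvs].
  assert (Hsvs : s <= vs).
  { apply Hleast; intros x [Hx [v [Hv Hxv]]].
    assert (Hxs : x <= s) by (apply Hub; split; [lra|]; exists v; auto).
    pose proof (Hmono x s v vs (conj (proj1 Hx) Hxs) Hsb Hv Hvs); lra. }
  assert (Hvsb : vs <= b) by exact (Hbound s vs (conj Has Hsb) Hvs).
  assert (Hvss : vs <= s).
  { apply Rnot_lt_le; intros Hlt.
    set (x := (s + vs) / 2).
    destruct (Hex x) as [v Hv]; [unfold x; lra|].
    pose proof (Hmono s x vs v ltac:(unfold x; lra) ltac:(unfold x; lra) Hvs Hv).
    assert (x <= s) by (apply Hub; split; [unfold x; lra|]; exists v; split; [auto|unfold x; lra]).
    unfold x in *; lra. }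
  exists s; split; [lra|].
  replace s with vs at 2 by lra; exact Hvs.
Qed.

Lemma exists_gt_1_of_lower_bound (A : R -> R) (a0 C b : R) :
  0 < b -> 0 <= C -> 1 < a0 -> (forall m, 0 <= m -> a0 <= (1 + C * m) * A m) ->
  exists m, 0 < m <= b /\ 1 < A m.
Proof.
  intros Hb HC Ha0 Hlow.
  set (m := Rmin b ((a0 - 1) / (C + 1))).
  assert (Hm : 0 < m) by (apply Rmin_glb_lt; [lra|apply Rdiv_lt_0_compat; lra]).
  assert (HCm : C * m < a0 - 1).
  { assert (m * (C + 1) <= a0 - 1).
    { apply (Rmult_le_reg_r (/ (C + 1))); [apply Rinv_0_lt_compat; lra|].
      rewrite Rmult_assoc, Rinv_r, Rmult_1_r by lra. apply Rmin_r. }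
    nra. }
  exists m; split; [split; [lra|apply Rmin_l]|].
  specialize (Hlow m (Rlt_le _ _ Hm)).
  apply Rnot_le_lt; intros HA.
  assert (0 <= C * m) by (apply Rmult_le_pos; lra).
  assert ((1 + C * m) * A m <= (1 + C * m) * 1) by (apply Rmult_le_compat_l; lra).
  lra.
Qed.

(** * Birth-death chains *)

Lemma detailed_balance_of_balance (b d p : nat -> R) (n : nat) :
  d 0%nat = 0 -> (forall x, (x <= n)%nat -> balance_at b d p x) ->
  forall x, (x <= n)%nat -> p (S x) * d (S x) = p x * b x.
Proof.
  intros Hd0 Hbal; induction x as [|x IH]; intros Hx.
  - specialize (Hbal 0%nat Hx); unfold balance_at in Hbal; rewrite Hd0 in Hbal; lra.
  - specialize (IH ltac:(lia)); specialize (Hbal (S x) Hx); unfold balance_at in Hbal; lra.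
Qed.

Lemma balance_of_detailed_balance (b d p : nat -> R) (n : nat) :
  d 0%nat = 0 -> (forall x, (x <= n)%nat -> p (S x) * d (S x) = p x * b x) ->
  forall x, (x <= n)%nat -> balance_at b d p x.
Proof.
  intros Hd0 Hdb [|x] Hx; unfold balance_at.
  - rewrite Hd0, (Hdb 0%nat Hx); ring.
  - rewrite <- (Hdb x ltac:(lia)), (Hdb (S x) Hx); ring.
Qed.

Lemma proportional_of_detailed_balance (b d p w : nat -> R) (n : nat) :
  (forall x, (x < n)%nat -> d (S x) <> 0) ->
  (forall x, (x < n)%nat -> p (S x) * d (S x) = p x * b x) ->
  (forall x, (x < n)%nat -> w (S x) * d (S x) = w x * b x) ->
  w 0%nat = 1 -> forall x, (x <= n)%nat -> p x = p 0%nat * w x.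
Proof.
  intros Hd Hp Hw Hw0; induction x as [|x IH]; intros Hx; [rewrite Hw0; ring|].
  apply (Rmult_eq_reg_r (d (S x))); [|apply Hd; lia].
  rewrite Hp, Rmult_assoc, Hw, IH by lia; ring.
Qed.

(** * Binomial weights *)

Fixpoint binom (n x : nat) : R :=
  match n, x with
  | _, O => 1
  | O, S _ => 0
  | S n, S x => binom n x + binom n (S x)
  end.

Lemma binom_0_r (n : nat) : binom n 0 = 1.
Proof. now destruct n. Qed.

Lemma binom_eq_0 (n x : nat) : (n < x)%nat -> binom n x = 0.
Proof.
  revert x; induction n as [|n IH]; intros [|x] Hx; try lia; [reflexivity|].
  simpl; rewrite !IH by lia; ring.
Qed.

Lemma binom_nonneg (n x : nat) : 0 <= binom n x.
Proof.
  revert x; induction n as [|n IH]; intros [|x]; simpl; try lra.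
  pose proof (IH x); pose proof (IH (S x)); lra.
Qed.

Lemma binom_succ_ratio (n x : nat) :
  INR (S x) * binom n (S x) = (INR n - INR x) * binom n x.
Proof.
  revert x; induction n as [|n IH]; intros [|x].
  - simpl; lra.
  - simpl; lra.
  - specialize (IH 0%nat); simpl binom in *; rewrite binom_0_r in *.
    rewrite !S_INR in *; simpl INR in *; lra.
  - change (binom (S n) (S (S x))) with (binom n (S x) + binom n (S (S x))).
    change (binom (S n) (S x)) with (binom n x + binom n (S x)).
    pose proof (IH (S x)); pose proof (IH x); rewrite !S_INR in *; nra.
Qed.

Lemma binom_absorption (n x : nat) :
  INR (S x) * binom (S n) (S x) = INR (S n) * binom n x.
Proof.
  rewrite binom_succ_ratio; destruct x as [|x].
  - rewrite !binom_0_r; simpl; lra.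
  - change (binom (S n) (S x)) with (binom n x + binom n (S x)).
    pose proof (binom_succ_ratio n x); rewrite !S_INR in *; nra.
Qed.

Fixpoint rising (t : R) (x : nat) : R :=
  match x with O => 1 | S x => rising t x * (t + INR x) end.

Lemma rising_succ (t : R) (x : nat) : rising t (S x) = t * rising (t + 1) x.
Proof.
  induction x as [|x IH]; [simpl; ring|].
  change (rising t (S (S x))) with (rising t (S x) * (t + INR (S x))).
  rewrite IH, S_INR; simpl; ring.
Qed.

Lemma rising_nonneg (t : R) (x : nat) : 0 <= t -> 0 <= rising t x.
Proof.
  intros Ht; induction x as [|x IH]; simpl; [lra|].
  pose proof (pos_INR x); apply Rmult_le_pos; lra.
Qed.

Definition weight (k t : R) (n x : nat) : R := binom n x * k ^ x * rising t x.
Definition total (k t : R) (n : nat) : R := sum_f_R0 (weight k t n) n.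
Definition moment (k t : R) (n : nat) : R := sum_f_R0 (fun x => INR x * weight k t n x) n.

Lemma weight_0 (k t : R) (n : nat) : weight k t n 0 = 1.
Proof. unfold weight; rewrite binom_0_r; simpl; ring. Qed.

Lemma weight_nonneg (k t : R) (n x : nat) : 0 <= k -> 0 <= t -> 0 <= weight k t n x.
Proof.
  intros Hk Ht; unfold weight.
  pose proof (binom_nonneg n x); pose proof (pow_le k x Hk); pose proof (rising_nonneg t x Ht).
  apply Rmult_le_pos; [apply Rmult_le_pos|]; assumption.
Qed.

Lemma weight_succ (k t : R) (n x : nat) :
  INR (S x) * weight k t n (S x) = weight k t n x * (k * (t + INR x) * (INR n - INR x)).
Proof.
  unfold weight; simpl rising; simpl pow.
  transitivity ((INR (S x) * binom n (S x)) * k * k ^ x * (rising t x * (t + INR x))); [ring|].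
  rewrite binom_succ_ratio; ring.
Qed.

Lemma total_ge_1 (k t : R) (n : nat) : 0 <= k -> 0 <= t -> 1 <= total k t n.
Proof.
  intros Hk Ht; unfold total; rewrite <- (weight_0 k t n).
  apply sum_f_R0_ge_term; [intros; apply weight_nonneg; assumption|lia].
Qed.

Lemma moment_le (k t : R) (n : nat) :
  0 <= k -> 0 <= t -> 0 <= moment k t n <= INR n * total k t n.
Proof.
  intros Hk Ht; unfold moment, total; split.
  - apply cond_pos_sum; intros x.
    apply Rmult_le_pos; [apply pos_INR|apply weight_nonneg; assumption].
  - rewrite scal_sum; apply sum_Rle; intros x Hx.
    pose proof (weight_nonneg k t n x Hk Ht); apply le_INR in Hx; nra.
Qed.

Lemma total_extend (k t : R) (n : nat) : total k t n = sum_f_R0 (weight k t n) (S n).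
Proof. unfold total, weight; simpl; rewrite binom_eq_0 by lia; ring. Qed.

Lemma total_succ_size (k t : R) (n : nat) :
  total k t (S n) = total k t n + t * k * total k (t + 1) n.
Proof.
  rewrite (total_extend k t n); unfold total; rewrite !sum_f_R0_succ_shift, !weight_0.
  rewrite scal_sum, Rplus_assoc, <- plus_sum; f_equal; apply sum_eq; intros i _.
  unfold weight; simpl binom; rewrite rising_succ; simpl pow; ring.
Qed.

Lemma total_succ_shift (k t : R) (n : nat) :
  total k (t + 1) (S n) = total k t (S n) + INR (S n) * k * total k (t + 1) n.
Proof.
  unfold total; rewrite !sum_f_R0_succ_shift, !weight_0, scal_sum, Rplus_assoc, <- plus_sum.
  f_equal; apply sum_eq; intros i _; unfold weight.
  rewrite (rising_succ t).
  change (rising (t + 1) (S i)) with (rising (t + 1) i * (t + 1 + INR i)).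
  transitivity (binom (S n) (S i) * k ^ S i * (t * rising (t + 1) i)
                + (INR (S i) * binom (S n) (S i)) * k ^ S i * rising (t + 1) i);
    [rewrite S_INR; ring|].
  rewrite binom_absorption; simpl pow; ring.
Qed.

Lemma moment_succ (k t : R) (n : nat) :
  moment k t (S n) = INR (S n) * t * k * total k (t + 1) n.
Proof.
  unfold moment, total; rewrite sum_f_R0_succ_shift, scal_sum; simpl INR at 1.
  rewrite Rmult_0_l, Rplus_0_l; apply sum_eq; intros i _; unfold weight.
  rewrite rising_succ.
  transitivity ((INR (S i) * binom (S n) (S i)) * k ^ S i * t * rising (t + 1) i); [ring|].
  rewrite binom_absorption; simpl pow; ring.
Qed.

(** * The continued fraction *)

Definition shrink (k t y : R) : R := y / (1 + t * k * y).

Fixpoint cfrac (k t : R) (n : nat) : R :=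
  match n with
  | O => 1
  | S n => 1 + INR (S n) * k * shrink k t (cfrac k t n)
  end.

Definition reduced_mean (k t : R) (n : nat) : R := shrink k t (cfrac k t n).

Section ContinuedFraction.

Variable k : R.
Hypothesis Hk : 0 < k.

Lemma shrink_0 (y : R) : shrink k 0 y = y.
Proof. unfold shrink; rewrite Rmult_0_l, Rmult_0_l, Rplus_0_r; apply Rdiv_1_r. Qed.

Lemma shrink_pos (t y : R) : 0 <= t -> 0 < y -> 0 < shrink k t y.
Proof.
  intros Ht Hy; unfold shrink.
  assert (0 <= t * k * y) by (apply Rmult_le_pos; [apply Rmult_le_pos|]; lra).
  apply Rdiv_lt_0_compat; lra.
Qed.

Lemma shrink_le_compat (t y y' : R) : 0 <= t -> 0 < y <= y' -> shrink k t y <= shrink k t y'.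
Proof.
  intros Ht Hy; unfold shrink.
  assert (0 <= t * k) by (apply Rmult_le_pos; lra).
  apply Rdiv_le_cross; nra.
Qed.

Lemma shrink_lt_antitone (t t' y : R) : 0 <= t < t' -> 0 < y -> shrink k t' y < shrink k t y.
Proof.
  intros Ht Hy; unfold shrink.
  assert (0 <= t * k * y) by (apply Rmult_le_pos; [apply Rmult_le_pos|]; lra).
  assert (t * k * y * y < t' * k * y * y)
    by (repeat apply Rmult_lt_compat_r; lra).
  apply Rdiv_lt_cross; nra.
Qed.

(* [t * shrink k t y] depends on [t] and [y] only through the product [t * y]. *)
Lemma scaled_shrink_le_compat (t t' y y' : R) :
  0 <= t -> 0 < y -> 0 < y' -> t * y <= t' * y' -> t * shrink k t y <= t' * shrink k t' y'.
Proof.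
  intros Ht Hy Hy' Hty; unfold shrink; rewrite !Rmult_div_assoc.
  assert (0 <= t * y) by (apply Rmult_le_pos; lra).
  apply Rdiv_le_cross; nra.
Qed.

Lemma shrink_lower_bound (c t y0 y : R) :
  0 <= c -> 0 <= t -> 0 < y0 -> 0 < y -> y0 <= (1 + c * t) * y ->
  shrink k 0 y0 <= (1 + (c + k * y0) * t) * shrink k t y.
Proof.
  intros Hc Ht Hy0 Hy Hlow; rewrite shrink_0; unfold shrink; rewrite Rmult_div_assoc.
  assert (0 <= t * k * y) by (apply Rmult_le_pos; [apply Rmult_le_pos|]; lra).
  rewrite <- (Rdiv_1_r y0) at 1; apply Rdiv_le_cross; nra.
Qed.

Lemma cfrac_succ (t : R) (n : nat) :
  cfrac k t (S n) = 1 + INR (S n) * k * shrink k t (cfrac k t n).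
Proof. reflexivity. Qed.

Lemma cfrac_ge_1 (t : R) (n : nat) : 0 <= t -> 1 <= cfrac k t n.
Proof.
  intros Ht; induction n as [|n IH]; rewrite ?cfrac_succ; [simpl; lra|].
  pose proof (shrink_pos t (cfrac k t n) Ht ltac:(lra)).
  pose proof (pos_INR (S n)).
  assert (0 <= INR (S n) * k * shrink k t (cfrac k t n))
    by (apply Rmult_le_pos; [apply Rmult_le_pos|]; lra).
  lra.
Qed.

Lemma reduced_mean_pos (t : R) (n : nat) : 0 <= t -> 0 < reduced_mean k t n.
Proof. intros Ht; apply shrink_pos; [|pose proof (cfrac_ge_1 t n Ht)]; lra. Qed.

Lemma reduced_mean_0 (n : nat) : reduced_mean k 0 n = cfrac k 0 n.
Proof. apply shrink_0. Qed.

Lemma cfrac_0_succ (n : nat) : cfrac k 0 (S n) = 1 + INR (S n) * k * cfrac k 0 n.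
Proof. rewrite cfrac_succ, shrink_0; reflexivity. Qed.

Lemma cfrac_antitone (t t' : R) (n : nat) :
  0 <= t <= t' -> cfrac k t' n <= cfrac k t n.
Proof.
  intros Ht; induction n as [|n IH]; rewrite ?cfrac_succ; [simpl; lra|].
  pose proof (cfrac_ge_1 t' n ltac:(lra)).
  assert (shrink k t' (cfrac k t' n) <= shrink k t (cfrac k t n)).
  { pose proof (cfrac_ge_1 t n (proj1 Ht)).
    apply Rle_trans with (shrink k t' (cfrac k t n)); [apply shrink_le_compat; lra|].
    destruct (Rle_lt_or_eq_dec t t' (proj2 Ht)) as [Hlt|Heq]; [|subst; lra].
    left; apply shrink_lt_antitone; lra. }
  pose proof (pos_INR (S n)).
  assert (0 <= INR (S n) * k) by (apply Rmult_le_pos; lra).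
  apply Rplus_le_compat_l, Rmult_le_compat_l; assumption.
Qed.

Lemma reduced_mean_lt_antitone (t t' : R) (n : nat) :
  0 <= t < t' -> reduced_mean k t' n < reduced_mean k t n.
Proof.
  intros Ht; unfold reduced_mean.
  pose proof (cfrac_ge_1 t' n ltac:(lra)); pose proof (cfrac_ge_1 t n ltac:(lra)).
  apply Rle_lt_trans with (shrink k t' (cfrac k t n)).
  - apply shrink_le_compat; [lra|]; split; [lra|apply cfrac_antitone; lra].
  - apply shrink_lt_antitone; lra.
Qed.

Lemma scaled_cfrac_le_compat (t t' : R) (n : nat) :
  0 <= t <= t' -> t * cfrac k t n <= t' * cfrac k t' n.
Proof.
  intros Ht; induction n as [|n IH]; rewrite ?cfrac_succ; [simpl; lra|].
  pose proof (cfrac_ge_1 t n ltac:(lra)); pose proof (cfrac_ge_1 t' n ltac:(lra)).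
  pose proof (scaled_shrink_le_compat t t' (cfrac k t n) (cfrac k t' n) (proj1 Ht)
                ltac:(lra) ltac:(lra) IH).
  pose proof (pos_INR (S n)).
  assert (0 <= INR (S n) * k) by (apply Rmult_le_pos; lra).
  assert (INR (S n) * k * (t * shrink k t (cfrac k t n))
          <= INR (S n) * k * (t' * shrink k t' (cfrac k t' n)))
    by (apply Rmult_le_compat_l; assumption).
  nra.
Qed.

Lemma scaled_reduced_mean_le_compat (t t' : R) (n : nat) :
  0 <= t <= t' -> t * reduced_mean k t n <= t' * reduced_mean k t' n.
Proof.
  intros Ht; pose proof (cfrac_ge_1 t n ltac:(lra)); pose proof (cfrac_ge_1 t' n ltac:(lra)).
  apply scaled_shrink_le_compat; try lra; apply scaled_cfrac_le_compat; lra.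
Qed.

Lemma cfrac_lower_bound (n : nat) :
  exists c, 0 <= c /\ forall t, 0 <= t -> cfrac k 0 n <= (1 + c * t) * cfrac k t n.
Proof.
  induction n as [|n [c [Hc IH]]]; [exists 0; split; [lra|]; intros; simpl; lra|].
  pose proof (cfrac_ge_1 0 n (Rle_refl 0)).
  exists (c + k * cfrac k 0 n); split; [nra|]; intros t Ht; rewrite !cfrac_succ.
  pose proof (cfrac_ge_1 t n Ht).
  pose proof (shrink_lower_bound c t (cfrac k 0 n) (cfrac k t n) Hc Ht ltac:(lra) ltac:(lra)
                (IH t Ht)).
  pose proof (shrink_pos t (cfrac k t n) Ht ltac:(lra)).
  pose proof (pos_INR (S n)).
  assert (0 <= INR (S n) * k) by (apply Rmult_le_pos; lra).
  assert (0 <= (c + k * cfrac k 0 n) * t) by (apply Rmult_le_pos; nra).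
  assert (INR (S n) * k * shrink k 0 (cfrac k 0 n)
          <= INR (S n) * k * ((1 + (c + k * cfrac k 0 n) * t) * shrink k t (cfrac k t n)))
    by (apply Rmult_le_compat_l; assumption).
  nra.
Qed.

Lemma reduced_mean_lower_bound (n : nat) :
  exists c, 0 <= c /\ forall t, 0 <= t -> reduced_mean k 0 n <= (1 + c * t) * reduced_mean k t n.
Proof.
  destruct (cfrac_lower_bound n) as [c [Hc Hlow]].
  pose proof (cfrac_ge_1 0 n (Rle_refl 0)).
  exists (c + k * cfrac k 0 n); split; [nra|]; intros t Ht.
  pose proof (cfrac_ge_1 t n Ht).
  apply shrink_lower_bound; try lra; apply Hlow; assumption.
Qed.

End ContinuedFraction.

Lemma shrink_total_ratio (k t : R) (n : nat) : 0 <= k -> 0 <= t ->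
  shrink k t (total k (t + 1) n / total k t n) = total k (t + 1) n / total k t (S n).
Proof.
  intros Hk Ht; unfold shrink; rewrite total_succ_size.
  pose proof (total_ge_1 k t n Hk Ht); pose proof (total_ge_1 k (t + 1) n Hk ltac:(lra)).
  assert (0 <= t * k * total k (t + 1) n) by (apply Rmult_le_pos; [apply Rmult_le_pos|]; lra).
  field; split; lra.
Qed.

Lemma cfrac_eq_total_ratio (k t : R) (n : nat) : 0 <= k -> 0 <= t ->
  cfrac k t n = total k (t + 1) n / total k t n.
Proof.
  intros Hk Ht; induction n as [|n IH].
  - unfold total; simpl; rewrite !weight_0; field.
  - rewrite cfrac_succ, IH, shrink_total_ratio, total_succ_shift by assumption.
    pose proof (total_ge_1 k t (S n) Hk Ht); field; lra.
Qed.

Lemma mean_ratio_succ (k t : R) (n : nat) : 0 <= k -> 0 <= t ->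
  moment k t (S n) / total k t (S n) = INR (S n) * t * k * reduced_mean k t n.
Proof.
  intros Hk Ht; unfold reduced_mean.
  rewrite cfrac_eq_total_ratio, shrink_total_ratio, moment_succ by assumption.
  pose proof (total_ge_1 k t (S n) Hk Ht); field; lra.
Qed.

(* Solved backwards from the top state, the Poisson equation says that the increments
   [g (h (x+1) - h x)] for x = n, n-1, ..., 0 obey the recursion defining [cfrac k 0]. *)
Lemma expected_integral_at_1 (lL g : R) (n : nat) (h : nat -> R) :
  0 < g -> expected_integral lL g (S n) h ->
  g * h 1%nat = cfrac (lL / (INR (S n) * g)) 0 n.
Proof.
  intros Hg [Hh0 Hpoisson]; set (k := lL / (INR (S n) * g)).
  assert (Hn : 0 < INR (S n)) by (apply lt_0_INR; lia).
  assert (Hincr : forall j x, (x + j = n)%nat -> g * (h (S x) - h x) = cfrac k 0 j).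
  { induction j as [|j IH]; intros x Hx.
    - rewrite Nat.add_0_r in Hx; subst x.
      specialize (Hpoisson (S n) ltac:(lia)); simpl pred in Hpoisson.
      rewrite Rdiv_diag, Rminus_diag in Hpoisson by lra; simpl cfrac.
      apply (Rmult_eq_reg_l (INR (S n))); lra.
    - specialize (IH (S x) ltac:(lia)).
      specialize (Hpoisson (S x) ltac:(lia)); simpl pred in Hpoisson.
      assert (Hsize : INR (S n) = INR (S x) + INR (S j)) by (rewrite <- plus_INR; f_equal; lia).
      assert (Hx0 : 0 < INR (S x)) by (apply lt_0_INR; lia).
      replace (1 - INR (S x) / INR (S n)) with (INR (S j) / INR (S n)) in Hpoisson
        by (rewrite Hsize; field; lra).
      assert (Hstep : lL * (INR (S j) / INR (S n)) * (h (S (S x)) - h (S x))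
                      - g * (h (S x) - h x) + 1 = 0).
      { apply (Rmult_eq_reg_l (INR (S x))); [|lra].
        rewrite Rmult_0_r, <- Hpoisson; ring. }
      rewrite cfrac_0_succ, <- IH; unfold k.
      replace (INR (S j) * (lL / (INR (S n) * g)) * (g * (h (S (S x)) - h (S x))))
        with (lL * (INR (S j) / INR (S n)) * (h (S (S x)) - h (S x))) by (field; lra).
      lra. }
  specialize (Hincr n 0%nat eq_refl); rewrite Hh0, Rminus_0_r in Hincr; exact Hincr.
Qed.

(** * The household model *)

Section Household.

Variables (lL lG g pb : R) (pi : nat -> R).
Hypotheses (HlL : 0 < lL) (HlG : 0 < lG) (Hg : 0 < g) (Hpb : 0 < pb)
  (Hpi : forall n, 0 <= pi n).

(* [kappa 0] is [lL / 0 = 0]; households of size 0 contribute nothing anyway. *)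
Definition kappa (nu : nat) : R := lL / (INR nu * g).
Definition shift (nu : nat) (m : R) : R := lG * INR nu / (pb * lL) * m.

Definition household_mean (m : R) (nu : nat) : R :=
  pi nu * (moment (kappa nu) (shift nu m) nu / total (kappa nu) (shift nu m) nu).

Definition per_capita (m : R) (nu : nat) : R :=
  pi nu * (lG * INR nu / (pb * g)) * reduced_mean (kappa nu) (shift nu m) (pred nu).

Lemma kappa_nonneg (nu : nat) : 0 <= kappa nu.
Proof.
  unfold kappa; destruct nu as [|n]; [simpl; rewrite Rmult_0_l, Rdiv_0_r; lra|].
  pose proof (lt_0_INR (S n) ltac:(lia)); left; apply Rdiv_lt_0_compat; nra.
Qed.

Lemma kappa_pos (n : nat) : 0 < kappa (S n).
Proof. unfold kappa; pose proof (lt_0_INR (S n) ltac:(lia)); apply Rdiv_lt_0_compat; nra. Qed.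

Lemma shift_nonneg (nu : nat) (m : R) : 0 <= m -> 0 <= shift nu m.
Proof.
  intros Hm; unfold shift; pose proof (pos_INR nu).
  apply Rmult_le_pos; [apply Rdiv_le_0_compat; nra|lra].
Qed.

Lemma shift_lt_compat (n : nat) (m m' : R) : m < m' -> shift (S n) m < shift (S n) m'.
Proof.
  intros Hm; unfold shift; pose proof (lt_0_INR (S n) ltac:(lia)).
  apply Rmult_lt_compat_l; [apply Rdiv_lt_0_compat; nra|lra].
Qed.

Lemma birth_eq (m : R) (n x : nat) :
  birth lL lG pb m (S n) x = g * (kappa (S n) * (shift (S n) m + INR x) * (INR (S n) - INR x)).
Proof.
  unfold birth, kappa, shift; pose proof (lt_0_INR (S n) ltac:(lia)).
  field; repeat split; lra.
Qed.

Lemma birth_top (m : R) (nu : nat) : birth lL lG pb m nu nu = 0.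
Proof.
  unfold birth; destruct nu as [|n].
  - simpl; unfold Rdiv; ring.
  - rewrite Rdiv_diag by (apply not_0_INR; lia); ring.
Qed.

Lemma weight_detailed_balance (m : R) (n x : nat) :
  weight (kappa (S n)) (shift (S n) m) (S n) (S x) * death g (S x)
  = weight (kappa (S n)) (shift (S n) m) (S n) x * birth lL lG pb m (S n) x.
Proof.
  unfold death; rewrite birth_eq.
  transitivity (g * (INR (S x) * weight (kappa (S n)) (shift (S n) m) (S n) (S x))); [ring|].
  rewrite weight_succ; ring.
Qed.

Lemma stationary_fibre (m : R) (mu : nat -> nat -> R) (nu x : nat) :
  0 <= m -> joint_stationary lL lG g pb m pi mu -> (x <= nu)%nat ->
  mu nu x = pi nu * weight (kappa nu) (shift nu m) nu x / total (kappa nu) (shift nu m) nu.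
Proof.
  intros Hm [_ [_ [Hsum Hbal]]] Hx.
  set (k := kappa nu); set (t := shift nu m).
  assert (Hprop : forall y, (y <= nu)%nat -> mu nu y = mu nu 0%nat * weight k t nu y).
  { apply (proportional_of_detailed_balance (birth lL lG pb m nu) (death g)).
    - intros y _; unfold death; pose proof (lt_0_INR (S y) ltac:(lia)); nra.
    - intros y Hy; apply (detailed_balance_of_balance _ _ _ nu); [unfold death; simpl; ring| |lia].
      intros z Hz; apply Hbal; exact Hz.
    - intros y Hy; destruct nu as [|n]; [lia|apply weight_detailed_balance].
    - apply weight_0. }
  assert (Htotal : pi nu = mu nu 0%nat * total k t nu).
  { rewrite <- Hsum; unfold total; rewrite scal_sum; apply sum_eq; intros y Hy.
    rewrite Hprop by exact Hy; ring. }
  pose proof (total_ge_1 k t nu (kappa_nonneg nu) (shift_nonneg nu m Hm)).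
  rewrite Hprop, Htotal by exact Hx; field; lra.
Qed.

Definition stationary_law (m : R) (nu x : nat) : R :=
  if (x <=? nu)%nat
  then pi nu * weight (kappa nu) (shift nu m) nu x / total (kappa nu) (shift nu m) nu
  else 0.

Lemma stationary_law_stationary (m : R) :
  0 <= m -> joint_stationary lL lG g pb m pi (stationary_law m).
Proof.
  intros Hm; unfold stationary_law.
  assert (Hw : forall nu x, 0 <= weight (kappa nu) (shift nu m) nu x)
    by (intros; apply weight_nonneg; [apply kappa_nonneg|apply shift_nonneg; exact Hm]).
  assert (HQ : forall nu, 1 <= total (kappa nu) (shift nu m) nu)
    by (intros; apply total_ge_1; [apply kappa_nonneg|apply shift_nonneg; exact Hm]).
  split; [|split; [|split]].
  - intros nu x; destruct (x <=? nu)%nat; [|lra].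
    unfold Rdiv; apply Rmult_le_pos; [apply Rmult_le_pos; [apply Hpi|apply Hw]|].
    left; apply Rinv_0_lt_compat; specialize (HQ nu); lra.
  - intros nu x Hx; rewrite (proj2 (Nat.leb_gt x nu) Hx); reflexivity.
  - intros nu; specialize (HQ nu); set (Q := total (kappa nu) (shift nu m) nu) in *.
    transitivity (pi nu / Q * Q); [|field; lra].
    unfold Q at 3, total; rewrite scal_sum; apply sum_eq; intros x Hx.
    rewrite (proj2 (Nat.leb_le x nu) Hx); field; lra.
  - intros nu; apply balance_of_detailed_balance; [unfold death; simpl; ring|].
    intros x Hx; rewrite (proj2 (Nat.leb_le x nu) Hx).
    destruct (Nat.eq_dec x nu) as [->|Hne].
    + rewrite (proj2 (Nat.leb_gt (S nu) nu) (Nat.lt_succ_diag_r nu)), birth_top; ring.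
    + rewrite (proj2 (Nat.leb_le (S x) nu)) by lia.
      destruct nu as [|n]; [lia|].
      set (Q := total (kappa (S n)) (shift (S n) m) (S n)).
      transitivity (pi (S n) / Q
                    * (weight (kappa (S n)) (shift (S n) m) (S n) (S x) * death g (S x)));
        [unfold Rdiv; ring|].
      rewrite weight_detailed_balance; unfold Rdiv; ring.
Qed.

Lemma household_mean_of_stationary (m : R) (mu : nat -> nat -> R) (nu : nat) :
  0 <= m -> joint_stationary lL lG g pb m pi mu ->
  sum_f_R0 (fun x => INR x * mu nu x) nu = household_mean m nu.
Proof.
  intros Hm Hstat; unfold household_mean, moment.
  set (Q := total (kappa nu) (shift nu m) nu).
  transitivity (pi nu / Q * sum_f_R0 (fun x => INR x * weight (kappa nu) (shift nu m) nu x) nu);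
    [|unfold Rdiv; ring].
  rewrite scal_sum; apply sum_eq; intros x Hx.
  rewrite (stationary_fibre m mu nu x Hm Hstat Hx); fold Q; unfold Rdiv; ring.
Qed.

Lemma mubar_is_iff (m v : R) :
  0 <= m -> mubar_is lL lG g pb pi m v <-> infinite_sum (household_mean m) v.
Proof.
  intros Hm; split.
  - intros [mu [Hstat Hmean]]; apply (infinite_sum_ext _ _ v Hmean).
    intros nu; apply household_mean_of_stationary; assumption.
  - intros Hv; exists (stationary_law m).
    pose proof (stationary_law_stationary m Hm) as Hstat; split; [exact Hstat|].
    apply (infinite_sum_ext _ _ v Hv); intros nu.
    symmetry; apply household_mean_of_stationary; assumption.
Qed.

Lemma household_mean_succ (m : R) (n : nat) : 0 <= m ->
  household_mean m (S n) = pi (S n) * INR (S n) * kappa (S n)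
    * (shift (S n) m * reduced_mean (kappa (S n)) (shift (S n) m) n).
Proof.
  intros Hm; unfold household_mean.
  rewrite mean_ratio_succ by (apply kappa_nonneg || apply shift_nonneg; exact Hm); ring.
Qed.

Lemma household_mean_eq (m : R) (nu : nat) : 0 <= m -> household_mean m nu = m * per_capita m nu.
Proof.
  intros Hm; destruct nu as [|n].
  - unfold household_mean, per_capita, moment; simpl; unfold Rdiv; ring.
  - rewrite household_mean_succ by exact Hm; unfold per_capita, kappa, shift; cbn [pred].
    pose proof (lt_0_INR (S n) ltac:(lia)); field; repeat split; lra.
Qed.

Lemma household_mean_bounds (m : R) (nu : nat) : 0 <= m ->
  0 <= household_mean m nu <= INR nu * pi nu.
Proof.
  intros Hm; unfold household_mean.
  pose proof (kappa_nonneg nu) as Hk; pose proof (shift_nonneg nu m Hm) as Ht.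
  pose proof (moment_le _ _ nu Hk Ht); pose proof (total_ge_1 _ _ nu Hk Ht).
  assert (Hratio : 0 <= moment (kappa nu) (shift nu m) nu / total (kappa nu) (shift nu m) nu
                   <= INR nu).
  { split; [apply Rdiv_le_0_compat; lra|].
    apply (Rmult_le_reg_r (total (kappa nu) (shift nu m) nu)); [lra|].
    unfold Rdiv; rewrite Rmult_assoc, Rinv_l; lra. }
  pose proof (Hpi nu); split; [apply Rmult_le_pos; lra|].
  rewrite Rmult_comm; apply Rmult_le_compat_r; lra.
Qed.

Lemma household_mean_le_compat (m m' : R) (nu : nat) :
  0 <= m <= m' -> household_mean m nu <= household_mean m' nu.
Proof.
  intros Hm; destruct nu as [|n].
  - rewrite !household_mean_eq by lra; unfold per_capita; simpl; lra.
  - rewrite !household_mean_succ by lra.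
    pose proof (kappa_pos n); pose proof (Hpi (S n)); pose proof (pos_INR (S n)).
    apply Rmult_le_compat_l; [apply Rmult_le_pos; [apply Rmult_le_pos|]; lra|].
    apply scaled_reduced_mean_le_compat; [exact (kappa_pos n)|split; [apply shift_nonneg; lra|]].
    unfold shift; pose proof (lt_0_INR (S n) ltac:(lia)).
    apply Rmult_le_compat_l; [apply Rdiv_le_0_compat; nra|lra].
Qed.

Lemma per_capita_nonneg (m : R) (nu : nat) : 0 <= m -> 0 <= per_capita m nu.
Proof.
  intros Hm; unfold per_capita; destruct nu as [|n]; [simpl; lra|].
  pose proof (Hpi (S n)); pose proof (lt_0_INR (S n) ltac:(lia)).
  pose proof (reduced_mean_pos _ (kappa_pos n) (shift (S n) m) n (shift_nonneg _ m Hm)).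
  apply Rmult_le_pos; [apply Rmult_le_pos; [lra|apply Rdiv_le_0_compat; nra]|cbn [pred]; lra].
Qed.

Lemma per_capita_le_antitone (m m' : R) (nu : nat) :
  0 <= m <= m' -> per_capita m' nu <= per_capita m nu.
Proof.
  intros Hm; unfold per_capita; destruct nu as [|n]; [simpl; lra|]; cbn [pred].
  pose proof (Hpi (S n)); pose proof (lt_0_INR (S n) ltac:(lia)).
  apply Rmult_le_compat_l; [apply Rmult_le_pos; [lra|apply Rdiv_le_0_compat; nra]|].
  destruct (Rle_lt_or_eq_dec m m' (proj2 Hm)) as [Hlt|Heq]; [|subst; lra].
  left; apply reduced_mean_lt_antitone; [apply kappa_pos|].
  split; [apply shift_nonneg; lra|apply shift_lt_compat; exact Hlt].
Qed.

Lemma per_capita_lt_antitone (m m' : R) (n : nat) :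
  0 < pi (S n) -> 0 <= m < m' -> per_capita m' (S n) < per_capita m (S n).
Proof.
  intros Hpin Hm; unfold per_capita; cbn [pred].
  pose proof (lt_0_INR (S n) ltac:(lia)).
  apply Rmult_lt_compat_l; [apply Rmult_lt_0_compat; [lra|apply Rdiv_lt_0_compat; nra]|].
  apply reduced_mean_lt_antitone; [apply kappa_pos|].
  split; [apply shift_nonneg; lra|apply shift_lt_compat; lra].
Qed.

Lemma per_capita_lower_bound (nu : nat) :
  exists c, 0 <= c /\ forall m, 0 <= m -> per_capita 0 nu <= (1 + c * m) * per_capita m nu.
Proof.
  destruct nu as [|n].
  - exists 0; split; [lra|]; intros m _; unfold per_capita; simpl; lra.
  - destruct (reduced_mean_lower_bound _ (kappa_pos n) n) as [c [Hc Hlow]].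
    set (s := lG * INR (S n) / (pb * lL)).
    assert (Hs : 0 <= s) by (unfold s; pose proof (pos_INR (S n)); apply Rdiv_le_0_compat; nra).
    exists (c * s); split; [apply Rmult_le_pos; lra|]; intros m Hm.
    unfold per_capita; cbn [pred]; unfold shift; fold s; rewrite Rmult_0_r.
    pose proof (Hpi (S n)); pose proof (lt_0_INR (S n) ltac:(lia)).
    assert (0 <= pi (S n) * (lG * INR (S n) / (pb * g)))
      by (apply Rmult_le_pos; [lra|apply Rdiv_le_0_compat; nra]).
    specialize (Hlow (s * m) ltac:(apply Rmult_le_pos; lra)).
    replace ((1 + c * s * m) * (pi (S n) * (lG * INR (S n) / (pb * g))
               * reduced_mean (kappa (S n)) (s * m) n))
      with (pi (S n) * (lG * INR (S n) / (pb * g))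
              * ((1 + c * (s * m)) * reduced_mean (kappa (S n)) (s * m) n)) by ring.
    apply Rmult_le_compat_l; assumption.
Qed.

Lemma per_capita_0 (h : nat -> nat -> R) (nu : nat) :
  (forall nu, (1 <= nu)%nat -> expected_integral lL g nu (h nu)) ->
  per_capita 0 nu = lG / pb * (pi nu * INR nu * h nu 1%nat).
Proof.
  intros Hh; unfold per_capita; destruct nu as [|n]; [simpl; unfold Rdiv; ring|]; cbn [pred].
  unfold shift; rewrite Rmult_0_r, reduced_mean_0; unfold kappa.
  rewrite <- (expected_integral_at_1 lL g n (h (S n)) Hg (Hh (S n) ltac:(lia))).
  field; lra.
Qed.

Lemma fixed_point_per_capita_sum (m : R) :
  0 < m -> infinite_sum (household_mean m) m -> infinite_sum (per_capita m) 1.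
Proof.
  intros Hm Hfix.
  pose proof (infinite_sum_scal _ _ (/ m) Hfix) as Hscaled; rewrite Rinv_l in Hscaled by lra.
  apply (infinite_sum_ext _ _ 1 Hscaled); intros nu.
  rewrite household_mean_eq by lra; field; lra.
Qed.

Section PositiveHouseholds.

Variable n0 : nat.
Hypothesis Hpin0 : 0 < pi (S n0).

Lemma no_positive_fixed_point (m : R) :
  (forall N, sum_f_R0 (per_capita 0) N <= 1) -> 0 < m -> ~ infinite_sum (household_mean m) m.
Proof.
  intros HR0 Hm Hfix.
  assert (1 < 1); [|lra].
  apply (infinite_sum_lt_bound (per_capita m) (per_capita 0) 1 1 (S n0)).
  - apply fixed_point_per_capita_sum; assumption.
  - intros nu; apply per_capita_le_antitone; lra.
  - apply per_capita_lt_antitone; [exact Hpin0|lra].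
  - exact HR0.
Qed.

Lemma positive_fixed_point_unique (m m' : R) : 0 < m -> 0 < m' ->
  infinite_sum (household_mean m) m -> infinite_sum (household_mean m') m' -> m = m'.
Proof.
  assert (Hlt : forall a b, 0 < a < b -> infinite_sum (household_mean a) a ->
                  infinite_sum (household_mean b) b -> False).
  { intros a b Hab Ha Hb.
    apply fixed_point_per_capita_sum in Ha; [|lra].
    apply fixed_point_per_capita_sum in Hb; [|lra].
    assert (1 < 1); [|lra].
    apply (infinite_sum_lt_bound (per_capita b) (per_capita a) 1 1 (S n0) Hb).
    - intros nu; apply per_capita_le_antitone; lra.
    - apply per_capita_lt_antitone; [exact Hpin0|lra].
    - intros N; apply sum_incr; [exact Ha|intros nu; apply per_capita_nonneg; lra]. }
  intros Hm Hm' Hfix Hfix'.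
  destruct (Rtotal_order m m') as [Hmm'|[Heq|Hm'm]]; [exfalso| exact Heq |exfalso].
  - exact (Hlt m m' (conj Hm Hmm') Hfix Hfix').
  - exact (Hlt m' m (conj Hm' Hm'm) Hfix' Hfix).
Qed.

End PositiveHouseholds.

Lemma positive_fixed_point_exists :
  infinite_sum (fun n => INR n * pi n) pb ->
  (exists N, 1 < sum_f_R0 (per_capita 0) N) ->
  exists m, 0 < m <= pb /\ infinite_sum (household_mean m) m.
Proof.
  intros Hsize [N HN].
  assert (Hmean : forall m, 0 <= m -> exists v, infinite_sum (household_mean m) v).
  { intros m Hm.
    destruct (Rseries_CV_comp (household_mean m) (fun n => INR n * pi n)
                (fun n => household_mean_bounds m n Hm) (exist _ pb Hsize)) as [v Hv].
    exists v; exact Hv. }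
  destruct (sum_f_R0_uniform_lower_bound per_capita N per_capita_nonneg
              per_capita_lower_bound) as [C [HC Hlow]].
  destruct (exists_gt_1_of_lower_bound (fun m => sum_f_R0 (per_capita m) N) _ C pb Hpb HC HN Hlow)
    as [m0 [Hm0 Hgt]].
  destruct (monotone_graph_fixed_point (fun m v => infinite_sum (household_mean m) v) m0 pb)
    as [m [Hm Hfix]]; [lra| | | | |exists m; split; [lra|exact Hfix]].
  - intros m Hm; apply Hmean; lra.
  - intros m m' v v' Hmm' _ Hv Hv'.
    apply (infinite_sum_le _ _ _ _ (fun nu => household_mean_le_compat m m' nu ltac:(lra)) Hv Hv').
  - intros m v Hm Hv.
    refine (infinite_sum_le _ _ _ _ _ Hv Hsize).
    intros nu; apply (household_mean_bounds m nu); lra.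
  - destruct (Hmean m0 ltac:(lra)) as [v Hv]; exists v; split; [exact Hv|].
    assert (Hpartial : sum_f_R0 (household_mean m0) N = m0 * sum_f_R0 (per_capita m0) N).
    { rewrite scal_sum; apply sum_eq; intros nu _; rewrite household_mean_eq by lra; ring. }
    pose proof (sum_incr _ N v Hv (fun nu => proj1 (household_mean_bounds m0 nu ltac:(lra)))).
    nra.
Qed.

End Household.

Theorem corollary7p5
  (lL lG g : R) (pi : nat -> R) (pb : R)
  (hlL : 0 < lL) (hlG : 0 < lG) (hg : 0 < g)
  (hpi_nn : forall n, 0 <= pi n)
  (hpi0 : pi O = 0)
  (hpi_sum : infinite_sum pi 1)
  (hpb : infinite_sum (fun n => INR n * pi n) pb)
  (hsecond : exists s, infinite_sum (fun n => INR n ^ 2 * pi n) s)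
  (h : nat -> nat -> R)
  (hh : forall nu, (1 <= nu)%nat -> expected_integral lL g nu (h nu)) :
  (R0_le_1 lG pb pi h ->
     mubar_is lL lG g pb pi 0 0 /\
     (forall m, 0 <= m <= pb -> mubar_is lL lG g pb pi m m -> m = 0)) /\
  (~ R0_le_1 lG pb pi h ->
     exists ms, 0 < ms <= pb /\ mubar_is lL lG g pb pi ms ms /\
       (forall m, 0 < m <= pb -> mubar_is lL lG g pb pi m m -> m = ms)).
Proof.
  destruct (infinite_sum_pos_term pi 1 hpi_sum Rlt_0_1) as [[|n0] Hn0];
    [rewrite hpi0 in Hn0; lra|].
  assert (Hpb : 0 < pb).
  { apply (infinite_sum_pos _ _ (S n0) hpb);
      [intros n; apply Rmult_le_pos; [apply pos_INR|apply hpi_nn]|].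
    apply Rmult_lt_0_compat; [apply lt_0_INR; lia|exact Hn0]. }
  pose proof (mubar_is_iff lL lG g pb pi hlL hlG hg Hpb hpi_nn) as Hmubar.
  assert (HR0 : forall N, sum_f_R0 (per_capita lL lG g pb pi 0) N
                          = lG / pb * sum_f_R0 (fun nu => pi nu * INR nu * h nu 1%nat) N).
  { intros N; rewrite scal_sum; apply sum_eq; intros nu _.
    rewrite (per_capita_0 lL lG g pb pi hg Hpb h nu hh); ring. }
  split.
  - intros Hle; split.
    + apply Hmubar; [lra|].
      apply (infinite_sum_ext _ _ 0 infinite_sum_zero); intros nu.
      rewrite household_mean_eq by (assumption || lra); ring.
    + intros m [Hm _] Hfix; apply Hmubar in Hfix; [|exact Hm].
      apply Rle_antisym; [apply Rnot_lt_le; intros Hpos|exact Hm].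
      refine (no_positive_fixed_point lL lG g pb pi hlL hlG hg Hpb hpi_nn n0 Hn0 m _ Hpos Hfix).
      intros N; rewrite HR0; apply Hle.
  - intros Hgt.
    destruct (positive_fixed_point_exists lL lG g pb pi hlL hlG hg Hpb hpi_nn hpb)
      as [ms [Hms Hfix]].
    { apply not_all_ex_not in Hgt as [N HN]; exists N; rewrite HR0; lra. }
    exists ms; split; [exact Hms|]; split; [apply Hmubar; [lra|exact Hfix]|].
    intros m [Hm _] Hfix'; apply Hmubar in Hfix'; [|lra].
    exact (positive_fixed_point_unique lL lG g pb pi hlL hlG hg Hpb hpi_nn n0 Hn0 m ms Hm
             (proj1 Hms) Hfix' Hfix).
Qed.
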